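(* Let $v=v(n)$ and $r=r(n)$ be positive integers with $v\to\infty$, $r\to\infty$ and $r=o(v)$. If the random vector $\mathbf d=(d_1,\dots,d_v)$ has distribution $\mathrm{Multi}(v,2v+r)|_{\ge2}$, then a.a.s. $D_3(\mathbf d)\sim r$ and \[\sum_{i:d_i\ge3}\binom{d_i}{2}<4r.\]
   Context: For positive integers $v,t$, $\mathrm{Multi}(v,t)$ is the multinomial distribution on vectors $(d_1,\dots,d_v)$ of nonnegative integers summing to $t$, with $\mathbf P[d_1=j_1,\dots,d_v=j_v]=\frac{t!}{v^t j_1!\cdots j_v!}$ (the numbers of balls in $v$ bins when $t$ balls are thrown independently and uniformly). $\mathrm{Multi}(v,t)|_{\ge2}$ is this distribution conditioned on the event that every $d_i\ge2$. $D_3(\mathbf d)=|\{i:d_i=3\}|$. A.a.s. means with probability $1-o(1)$ as $n\to\infty$. *)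

From HB Require Import structures.
From mathcomp Require Import all_boot all_order all_algebra.
Set Implicit Arguments. Unset Strict Implicit. Unset Printing Implicit Defensive.
Import Order.TTheory GRing.Theory Num.Theory.
Local Open Scope ring_scope.

(* Candidate outcome vectors (d_1,...,d_v); any vector of nonnegative
   integers summing to t has entries <= t, so 'I_t.+1 entries suffice. *)
Definition vec (v t : nat) := {ffun 'I_v -> 'I_t.+1}.

Definition multi_pmf (v t : nat) (d : vec v t) : rat :=
  if (\sum_(i < v) (d i : nat))%N == t
  then (t`!)%:R / ((v ^ t)%:R * (\prod_(i < v) ((d i : nat)`!))%:R)
  else 0.

Definition all_ge2 (v t : nat) (d : vec v t) : bool := [forall i, 2 <= (d i : nat)]%N.

Definition cond_prob (v t : nat) (A : pred (vec v t)) : rat :=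
  (\sum_(d : vec v t | all_ge2 d && A d) multi_pmf d)
  / (\sum_(d : vec v t | all_ge2 d) multi_pmf d).

Definition D3 (v t : nat) (d : vec v t) : nat := #|[set i | (d i : nat) == 3]%N|.

Definition big_binom_sum (v t : nat) (d : vec v t) : nat :=
  (\sum_(i < v | 3 <= (d i : nat)) 'C(d i, 2))%N.

Definition good_event (v t r : nat) (eps : rat) : pred (vec v t) :=
  fun d => (`|(D3 d)%:R - r%:R| <= eps * r%:R :> rat) && (big_binom_sum d < 4 * r)%N.

Arguments good_event : clear implicits.

From HB Require Import structures.
From mathcomp Require Import all_boot all_order all_algebra.
From mathcomp Require Import zify ring lra.
Set Implicit Arguments. Unset Strict Implicit. Unset Printing Implicit Defensive.
Import Order.TTheory GRing.Theory Num.Theory.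
Local Open Scope ring_scope.

(* Conditioned on every d_i >= 2, the weight of d is proportional to prod_i 1/d_i!, so the
   mass of the conditional law and its expectations are coefficients of powers of the
   truncated exponential P(x) = sum_(2 <= j <= t) x^j/j!.  Writing d_i = 2 + e_i, the excess
   sum_i e_i = r splits as D_3 + sum_(d_i >= 4) (d_i - 2), so both claims hold as soon as
   Q(d) = sum_(d_i >= 4) C(d_i, 2) is below a small multiple of r.  Comparing x P' with
   2 P + x P / 3 shows that the coefficients c_s of P^m satisfy c_s <= (3r/m) c_(s+1) below
   degree 2m + r; this gives E[Q] = O(r^2/v) = o(r), and Markov's inequality concludes. *)

Definition ge2_weight (j : nat) : rat := if (2 <= j)%N then (j`!)%:R^-1 else 0.

Definition exp_ge2 (t : nat) : {poly rat} := \poly_(j < t.+1) ge2_weight j.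

Definition binom_ge4 (j : nat) : nat := if (4 <= j)%N then 'C(j, 2) else 0.

Definition binom_ge4_series (t : nat) : {poly rat} :=
  \poly_(j < t.+1) ((binom_ge4 j)%:R * ge2_weight j).

Definition binom_ge4_sum (v t : nat) (d : vec v t) : nat := (\sum_i binom_ge4 (d i))%N.

Definition nneg_coefs (p : {poly rat}) : Prop := forall k, 0 <= p`_k.

Lemma prod_scale_Xn (I : finType) (a : I -> rat) (n : I -> nat) :
  \prod_i (a i *: 'X^(n i)) = (\prod_i a i) *: ('X^(\sum_i n i) : {poly rat}).
Proof.
under eq_bigr do rewrite -mul_polyC.
by rewrite big_split /= prodrXr -mul_polyC rmorph_prod.
Qed.

Lemma sum_ffun_prod_coef (v t s : nat) (G : 'I_v -> nat -> rat) :
  \sum_(d : {ffun 'I_v -> 'I_t.+1} | (\sum_i (d i : nat))%N == s) \prod_i G i (d i)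
  = (\prod_(i < v) \sum_(j < t.+1) G i j *: 'X^j)`_s.
Proof.
rewrite bigA_distr_bigA /=.
rewrite (eq_bigr _ (fun (d : {ffun 'I_v -> 'I_t.+1}) _ =>
  prod_scale_Xn (fun i => G i (d i)) (fun i => nat_of_ord (d i)))).
by rewrite coef_sumMXn; apply: eq_bigl => d; rewrite eq_sym.
Qed.

Lemma ge2_weight_ge0 j : 0 <= ge2_weight j.
Proof. by rewrite /ge2_weight; case: ifP => _ //; rewrite invr_ge0 ler0n. Qed.

Lemma nneg_coefs_exp_ge2 t : nneg_coefs (exp_ge2 t).
Proof. by move=> k; rewrite coef_poly; case: ifP => // _; apply: ge2_weight_ge0. Qed.

Lemma nneg_coefsM p q : nneg_coefs p -> nneg_coefs q -> nneg_coefs (p * q).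
Proof. by move=> hp hq k; rewrite coefM; apply: sumr_ge0 => j _; apply: mulr_ge0. Qed.

Lemma nneg_coefsX p m : nneg_coefs p -> nneg_coefs (p ^+ m).
Proof.
move=> hp; elim: m => [|m IH]; first by move=> k; rewrite expr0 coefC; case: ifP.
by rewrite exprS; apply: nneg_coefsM.
Qed.

Lemma coef_exp_ge2X_ge0 t m s : 0 <= (exp_ge2 t ^+ m)`_s.
Proof. exact/nneg_coefsX/nneg_coefs_exp_ge2. Qed.

Lemma coefM_ge_term p q i j : nneg_coefs p -> nneg_coefs q -> (j <= i)%N ->
  p`_j * q`_(i - j) <= (p * q)`_i.
Proof.
move=> hp hq hji; rewrite coefM (bigD1 (Ordinal (hji : j < i.+1)%N)) //= lerDl.
by apply: sumr_ge0 => k _; apply: mulr_ge0.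
Qed.

Lemma coefMr_le (p q u : {poly rat}) n : (forall k, (k <= n)%N -> p`_k <= q`_k) -> nneg_coefs u ->
  (p * u)`_n <= (q * u)`_n.
Proof.
move=> hpq hu; rewrite !coefM; apply: ler_sum => j _.
by apply: ler_wpM2r => //; apply: hpq; rewrite -ltnS.
Qed.

Lemma ge2_weight_step k :
  2%:R * ge2_weight k.+1 + 3%:R^-1 * ge2_weight k <= ge2_weight k.+1 *+ k.+1.
Proof.
case: k => [|[|k]]; rewrite /ge2_weight /=.
- by rewrite !mulr0 addr0.
- by rewrite mulr0 addr0 -mulr_natr; lra.
rewrite (factS k.+2) natrM invfM.
set a := (k.+3%:R : rat)^-1; set b := ((k.+2)`!%:R : rat)^-1.
have hb : 0 <= b by rewrite invr_ge0 ler0n.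
have ha : a *+ k.+3 = 1 by rewrite -mulr_natr /a mulVf // pnatr_eq0.
rewrite -mulrnAl ha mul1r mulrA -mulrDl -[X in _ <= X]mul1r ler_wpM2r //.
have : a <= 3%:R^-1 by rewrite ler_pV2 ?inE ?unitfE ?pnatr_eq0 ?ltr0n // ler_nat.
lra.
Qed.

Lemma coef_exp_ge2_le_X_deriv t k : (k <= t)%N ->
  (2%:R *: exp_ge2 t + 3%:R^-1 *: ('X * exp_ge2 t))`_k <= ('X * (exp_ge2 t)^`())`_k.
Proof.
rewrite coefD !coefZ !coefXM coef_deriv.
case: k => [|k] hk /=; first by rewrite coef_poly /= /ge2_weight /= !mulr0 addr0.
by rewrite !coef_poly ltnS hk ltnS (ltnW hk); apply: ge2_weight_step.
Qed.

Section CoefficientRatio.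

Variables (t m : nat).
Hypothesis m_gt0 : (0 < m)%N.
Local Notation c s := ((exp_ge2 t ^+ m)`_s).

(* (s+1) c_(s+1) is the s-th coefficient of (P^m)' = m P' P^(m-1). *)
Lemma coef_exp_ge2X_rec s : (s.+1 <= t)%N ->
  (2%:R * c s.+1 + 3%:R^-1 * c s) *+ m <= c s.+1 *+ s.+1.
Proof.
move=> hs; set P := exp_ge2 t.
rewrite -coef_deriv deriv_exp coefMn lerMn2r; apply/orP; right.
have -> : (P^`() * P ^+ m.-1)`_s = ('X * P^`() * P ^+ m.-1)`_s.+1 by rewrite -mulrA coefXM.
have hderiv k : (k <= s.+1)%N -> _ := fun hk => coef_exp_ge2_le_X_deriv (leq_trans hk hs).
apply: le_trans (coefMr_le hderiv (nneg_coefsX m.-1 (nneg_coefs_exp_ge2 t))).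
by rewrite [in X in _ <= X]mulrDl -!scalerAl coefD !coefZ -mulrA -exprS prednK // coefXM.
Qed.

Lemma coef_exp_ge2X_le_succ r s : (s.+1 <= 2 * m + r)%N -> (2 * m + r <= t)%N ->
  c s <= 3%:R * r%:R / m%:R * c s.+1.
Proof.
move=> hs hrt; have := coef_exp_ge2X_rec (leq_trans hs hrt).
have hcs := coef_exp_ge2X_ge0 t m s.+1.
have hm : 0 < (m%:R : rat) by rewrite ltr0n.
have hsr : c s.+1 * s.+1%:R <= c s.+1 * (2%:R * m%:R + r%:R).
  by rewrite ler_wpM2l // -natrM -natrD ler_nat.
rewrite -[_ *+ m]mulr_natr -[_ *+ s.+1]mulr_natr mulrAC ler_pdivlMr //.
lra.
Qed.

Lemma coef_exp_ge2X_le_pred r j : (2 * m + r <= t)%N -> (j <= 2 * m + r)%N ->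
  c (2 * m + r - j) <= (3%:R * r%:R / m%:R) ^+ j * c (2 * m + r).
Proof.
move=> hrt; elim: j => [|j IH] hj; first by rewrite subn0 expr0 mul1r.
have hy : 0 <= 3%:R * r%:R / m%:R :> rat by rewrite !mulr_ge0 ?invr_ge0 ?ler0n.
have hs : ((2 * m + r - j.+1).+1 = 2 * m + r - j)%N by rewrite subnS prednK // subn_gt0.
apply: le_trans (coef_exp_ge2X_le_succ _ hrt) _; first by rewrite hs leq_subr.
rewrite hs exprS -[in X in _ <= X]mulrA ler_wpM2l //.
exact: IH (ltnW hj).
Qed.

End CoefficientRatio.

Lemma binom_ge4_weight_le1 j : (binom_ge4 j)%:R * ge2_weight j <= 1.
Proof.
rewrite /binom_ge4 /ge2_weight; case: ifP => h4; last by rewrite mul0r.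
have h2 : (2 <= j)%N by apply: leq_trans h4.
rewrite h2 ler_pdivrMr ?ltr0n ?fact_gt0 // mul1r ler_nat -(bin_fact h2).
by apply: leq_pmulr; rewrite muln_gt0 !fact_gt0.
Qed.

Lemma sum_half_pow_le2 n : \sum_(k < n) (2%:R^-1 : rat) ^+ k <= 2%:R.
Proof.
have := subrX1 (2%:R^-1 : rat) n.
have : 0 <= (2%:R^-1 : rat) ^+ n by rewrite exprn_ge0.
lra.
Qed.

Section BinomGe4Coefficient.

Variables (m r : nat).
Hypothesis m_gt0 : (0 < m)%N.
Local Notation N := (2 * m + r)%N.
Local Notation y := (3%:R * r%:R / m%:R : rat).
Local Notation c s := ((exp_ge2 N.+2 ^+ m)`_s).
Hypothesis y_le_half : y <= 2%:R^-1.

Let y_ge0 : 0 <= y. Proof. by rewrite !mulr_ge0 ?invr_ge0 ?ler0n. Qed.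

Lemma binom_ge4_series_term_le k : (k <= N.+2)%N ->
  (binom_ge4_series N.+2)`_k * c (N.+2 - k) <= 16%:R * y ^+ 2 * c N * 2%:R^-1 ^+ k.
Proof.
have hrhs : 0 <= 16%:R * y ^+ 2 * c N * 2%:R^-1 ^+ k.
  by rewrite !mulr_ge0 ?exprn_ge0 ?coef_exp_ge2X_ge0 ?invr_ge0 ?ler0n.
rewrite coef_poly ltnS => hk; rewrite hk.
case: k hk hrhs => [|[|[|[|j]]]] hk hrhs; try by rewrite /binom_ge4 /= !mul0r.
apply: le_trans (_ : _ <= c (N - j.+2)) _.
  by apply: ler_piMl; [apply: coef_exp_ge2X_ge0 | apply: binom_ge4_weight_le1].
have hj : (j.+2 <= N)%N by rewrite -ltnS -ltnS.
apply: le_trans (coef_exp_ge2X_le_pred m_gt0 (leqW (leqnSn N)) hj) _.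
have e16 (a : rat) : 16%:R * a * 2%:R^-1 ^+ j.+4 = 2%:R^-1 ^+ j * a.
  by rewrite -[j.+4]/(4 + j)%N exprD; field.
have -> : y ^+ j.+2 * c N = y ^+ j * (y ^+ 2 * c N) by rewrite mulrA -exprD addn2.
rewrite -(mulrA 16%:R) e16 ler_wpM2r //.
  by rewrite mulr_ge0 ?coef_exp_ge2X_ge0 ?exprn_ge0 ?y_ge0.
by apply: lerXn2r; rewrite ?nnegrE ?y_ge0.
Qed.

Lemma coef_binom_ge4_seriesM_le :
  (binom_ge4_series N.+2 * exp_ge2 N.+2 ^+ m)`_N.+2 <= 16%:R * y ^+ 2 * c N * 2%:R.
Proof.
rewrite coefM; apply: le_trans (_ : _ <= \sum_(k < N.+3) 16%:R * y ^+ 2 * c N * 2%:R^-1 ^+ k) _.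
  by apply: ler_sum => k _; apply: binom_ge4_series_term_le; rewrite -ltnS.
rewrite -mulr_sumr; apply: ler_wpM2l; last exact: sum_half_pow_le2.
apply: mulr_ge0; last exact: coef_exp_ge2X_ge0.
by apply: mulr_ge0; [exact: ler0n | exact: exprn_ge0].
Qed.

End BinomGe4Coefficient.

Definition ge2_scale (v t : nat) : rat := (t`!)%:R / (v ^ t)%:R.

Lemma multi_pmf_all_ge2 (v t : nat) (d : vec v t) :
  (if all_ge2 d then multi_pmf d else 0) =
  (if (\sum_i (d i : nat))%N == t then ge2_scale v t * \prod_i ge2_weight (d i) else 0).
Proof.
rewrite /multi_pmf; case: eqP => _; last by case: all_ge2.
case: (boolP (all_ge2 d)) => [/forallP ge2 | /forallPn [i lt2]].
  rewrite (eq_bigr (fun i => ((d i)`!)%:R^-1)) => [|i _]; last by rewrite /ge2_weight ge2.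
  by rewrite prodfV -natr_prod invfM mulrA.
by rewrite (bigD1 i) //= {1}/ge2_weight (negbTE lt2) mul0r mulr0.
Qed.

Lemma all_ge2_mass (v t : nat) :
  \sum_(d : vec v t | all_ge2 d) multi_pmf d = ge2_scale v t * (exp_ge2 t ^+ v)`_t.
Proof.
rewrite big_mkcond /=; under eq_bigr do rewrite multi_pmf_all_ge2.
rewrite -big_mkcond /= -mulr_sumr (sum_ffun_prod_coef t t (fun _ => ge2_weight)).
by rewrite /exp_ge2 poly_def prodr_const card_ord.
Qed.

Lemma sum_binom_ge4_weight_coef (v t : nat) (i : 'I_v) :
  \sum_(d : vec v t | (\sum_k (d k : nat))%N == t)
      (binom_ge4 (d i))%:R * \prod_k ge2_weight (d k)
  = (binom_ge4_series t * exp_ge2 t ^+ v.-1)`_t.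
Proof.
pose G k j := if k == i then (binom_ge4 j)%:R * ge2_weight j else ge2_weight j.
transitivity (\sum_(d : vec v t | (\sum_k (d k : nat))%N == t) \prod_k G k (d k)).
  apply: eq_bigr => d _; rewrite (bigD1 i) //= [RHS](bigD1 i) //= /G eqxx -mulrA.
  by congr (_ * (_ * _)); apply: eq_bigr => k /negbTE ->.
rewrite sum_ffun_prod_coef (bigD1 i) //= {1}/G eqxx /binom_ge4_series poly_def.
congr (nth 0 (polyseq (_ * _)) t); rewrite -[v in v.-1]card_ord -(cardC1 i) -prodr_const.
apply: eq_bigr => k /negbTE hk; rewrite /exp_ge2 poly_def.
by apply: eq_bigr => j _; rewrite /G hk.
Qed.

Lemma all_ge2_binom_ge4_mass (v t : nat) :
  \sum_(d : vec v t | all_ge2 d) multi_pmf d * (binom_ge4_sum d)%:R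
  = ge2_scale v t * (v%:R * (binom_ge4_series t * exp_ge2 t ^+ v.-1)`_t).
Proof.
transitivity (\sum_(d : vec v t | (\sum_i (d i : nat))%N == t)
                 ge2_scale v t * (\prod_i ge2_weight (d i) * (binom_ge4_sum d)%:R)).
  rewrite big_mkcond [RHS]big_mkcond; apply: eq_bigr => d _ /=.
  have := multi_pmf_all_ge2 d.
  case: all_ge2; case: eqP => _ /= h; first by rewrite h mulrA.
  - by rewrite h mul0r.
  - by rewrite mulrA -h mul0r.
  - by [].
rewrite -mulr_sumr; congr (_ * _).
under eq_bigr do rewrite /binom_ge4_sum natr_sum mulr_sumr.
rewrite exchange_big /=.
under eq_bigr do under eq_bigr do rewrite mulrC.
under eq_bigr do rewrite sum_binom_ge4_weight_coef.
by rewrite sumr_const card_ord mulr_natl.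
Qed.

Section ExcessDecomposition.

Variables (v t : nat) (d : vec v t).

Let excess4 := (\sum_i (if 4 <= d i then d i - 2 else 0))%N.

Lemma D3E : D3 d = (\sum_i (d i == 3 :> nat))%N.
Proof. by rewrite /D3 -sum1_card big_mkcond; apply: eq_bigr => i _; rewrite inE; case: eqP. Qed.

Lemma big_binom_sumE : big_binom_sum d = (3 * D3 d + binom_ge4_sum d)%N.
Proof.
rewrite /big_binom_sum big_mkcond D3E big_distrr -big_split /=.
by apply: eq_bigr => i _; rewrite /binom_ge4; case: (nat_of_ord (d i)) => [|[|[|[|n]]]].
Qed.

Lemma excess4_le_binom_ge4_sum : (excess4 <= binom_ge4_sum d)%N.
Proof.
apply: leq_sum => i _; rewrite /binom_ge4; case: ifP => // _.
case: (nat_of_ord (d i)) => [|n] //; rewrite binS bin1.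
by apply: leq_trans (leq_addl _ _); rewrite subSS leq_subr.
Qed.

Lemma D3_add_excess4 r : all_ge2 d -> (\sum_i (d i : nat))%N = (2 * v + r)%N ->
  (D3 d + excess4)%N = r.
Proof.
move=> /forallP d_ge2 d_sum.
have two_v : (2 * v = \sum_(i < v) 2)%N by rewrite sum_nat_const card_ord mulnC.
apply/eqP; rewrite -(eqn_add2l (2 * v)) -d_sum D3E -big_split /= two_v -big_split /=.
apply/eqP/eq_bigr => i _.
by have := d_ge2 i; case: (nat_of_ord (d i)) => [|[|[|[|n]]]].
Qed.

Lemma good_event_of_binom_ge4_sum_lt r (eps c : rat) :
  all_ge2 d -> (\sum_i (d i : nat))%N = (2 * v + r)%N -> c <= eps -> c <= 1 ->
  (binom_ge4_sum d)%:R < c * r%:R -> good_event v t r eps d.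
Proof.
move=> d_ge2 d_sum c_eps c1 Qlt; have split := D3_add_excess4 d_ge2 d_sum.
have Qr : (binom_ge4_sum d < r)%N.
  by rewrite -(ltr_nat rat); apply: lt_le_trans Qlt _; rewrite ler_piMl.
apply/andP; split.
  have -> : (D3 d)%:R - r%:R = - (excess4%:R : rat).
    by rewrite -[in r%:R]split natrD opprD addrA subrr add0r.
  rewrite normrN ger0_norm ?ler0n //.
  apply: le_trans (_ : (binom_ge4_sum d)%:R <= _).
    by rewrite ler_nat excess4_le_binom_ge4_sum.
  by rewrite (ltW (lt_le_trans Qlt _)) // ler_wpM2r.
by rewrite big_binom_sumE; lia.
Qed.

End ExcessDecomposition.

Lemma multi_pmf_ge0 (v t : nat) (d : vec v t) : 0 <= multi_pmf d.
Proof. by rewrite /multi_pmf; case: ifP => // _; rewrite divr_ge0 ?mulr_ge0 ?ler0n. Qed.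

Lemma cond_prob_ge0 (v t : nat) (A : pred (vec v t)) : 0 <= cond_prob A.
Proof. by rewrite /cond_prob divr_ge0 // sumr_ge0 // => d _; apply: multi_pmf_ge0. Qed.

Lemma markov_binom_ge4_sum (v r : nat) (eps c : rat) : c <= eps -> c <= 1 ->
  (\sum_(d : vec v (2 * v + r) | all_ge2 d && ~~ good_event v (2 * v + r) r eps d)
      multi_pmf d) * (c * r%:R)
  <= \sum_(d : vec v (2 * v + r) | all_ge2 d) multi_pmf d * (binom_ge4_sum d)%:R.
Proof.
move=> c_eps c1; rewrite big_mkcondr /= mulr_suml; apply: ler_sum => d d_ge2.
case: ifP => bad; last by rewrite mul0r mulr_ge0 ?multi_pmf_ge0 ?ler0n.
case: (boolP ((\sum_i (d i : nat))%N == (2 * v + r)%N)) => [/eqP d_sum | ]; last first.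
  by rewrite /multi_pmf => /negbTE ->; rewrite !mul0r.
rewrite ler_wpM2l ?multi_pmf_ge0 // leNgt; apply/negP => Qlt.
by move: bad; rewrite (good_event_of_binom_ge4_sum_lt d_ge2 d_sum c_eps c1 Qlt).
Qed.

Lemma coef_exp_ge2X_shift t m s : (2 <= t)%N ->
  (exp_ge2 t ^+ m)`_s <= 2%:R * (exp_ge2 t ^+ m.+1)`_s.+2.
Proof.
move=> t2; have := coefM_ge_term (nneg_coefs_exp_ge2 t)
  (nneg_coefsX m (nneg_coefs_exp_ge2 t)) (isT : (2 <= s.+2)%N).
rewrite -exprS !subSS subn0 coef_poly ltnS t2 /ge2_weight /= => h.
by rewrite -(mulVKf (_ : 2%:R != 0 :> rat) ((exp_ge2 t ^+ m)`_s)) // ler_wpM2l.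
Qed.

Lemma coef_exp_ge2X_gt0 t m k : (2 <= k <= t)%N -> 0 < (exp_ge2 t ^+ m.+1)`_(2 * m + k).
Proof.
case/andP=> k2 kt; elim: m => [|m IH].
  by rewrite expr1 coef_poly ltnS kt /ge2_weight k2 invr_gt0 ltr0n fact_gt0.
have := coefM_ge_term (nneg_coefs_exp_ge2 t) (nneg_coefsX m.+1 (nneg_coefs_exp_ge2 t))
  (isT : (2 <= (2 * m + k).+2)%N).
rewrite -exprS !subSS subn0 coef_poly ltnS (leq_trans k2 kt) /ge2_weight /=.
rewrite (_ : 2 * m.+1 + k = (2 * m + k).+2)%N; last by lia.
by apply: lt_le_trans; rewrite mulr_gt0 ?invr_gt0 ?ltr0n.
Qed.

Lemma all_ge2_mass_gt0 (v t : nat) : (0 < v)%N -> (2 * v <= t)%N ->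
  0 < \sum_(d : vec v t | all_ge2 d) multi_pmf d.
Proof.
case: v => // m _ mt; rewrite all_ge2_mass mulr_gt0 ?divr_gt0 ?ltr0n ?fact_gt0 ?expn_gt0 //.
have -> : t = (2 * m + (t - 2 * m))%N by lia.
by apply: coef_exp_ge2X_gt0; apply/andP; split; lia.
Qed.

Section MassBounds.

Variables (m R : nat).
Hypothesis m_gt0 : (0 < m)%N.
Local Notation y := (3%:R * R%:R / m%:R : rat).
Local Notation vec_ := (vec m.+1 (2 * m.+1 + R)).

Lemma all_ge2_binom_ge4_mass_le : y <= 2%:R^-1 ->
  \sum_(d : vec_ | all_ge2 d) multi_pmf d * (binom_ge4_sum d)%:R
  <= 64%:R * m.+1%:R * y ^+ 2 * \sum_(d : vec_ | all_ge2 d) multi_pmf d.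
Proof.
move=> y_half; rewrite all_ge2_binom_ge4_mass all_ge2_mass /=.
rewrite (_ : 2 * m.+1 + R = (2 * m + R).+2)%N; last by lia.
set N := (2 * m + R)%N; set K := ge2_scale _ _; set a := (exp_ge2 N.+2 ^+ m.+1)`_N.+2.
have K_ge0 : 0 <= K by rewrite divr_ge0 ?ler0n.
clearbody K.
have y_ge0 : 0 <= y by rewrite !mulr_ge0 ?invr_ge0 ?ler0n.
have -> : 64%:R * m.+1%:R * y ^+ 2 * (K * a)
          = K * (m.+1%:R * (16%:R * y ^+ 2 * (2%:R * a) * 2%:R)) by ring.
apply: (ler_wpM2l K_ge0); apply: (ler_wpM2l (ler0n _ m.+1)).
apply: le_trans (coef_binom_ge4_seriesM_le m_gt0 y_half) _.
apply: (ler_wpM2r (ler0n rat 2)); apply: ler_wpM2l.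
  by rewrite mulr_ge0 ?exprn_ge0.
exact: coef_exp_ge2X_shift.
Qed.

Lemma cond_prob_good_event_ge (eps c : rat) : (0 < R)%N -> 0 < c -> c <= eps -> c <= 1 ->
  y <= 2%:R^-1 ->
  1 - 64%:R * m.+1%:R * y ^+ 2 / (c * R%:R)
  <= cond_prob (good_event m.+1 (2 * m.+1 + R) R eps).
Proof.
move=> R_gt0 c_gt0 c_eps c1 y_half.
have := markov_binom_ge4_sum m.+1 R c_eps c1.
move/le_trans/(_ (all_ge2_binom_ge4_mass_le y_half)).
have mass_gt0 := @all_ge2_mass_gt0 m.+1 (2 * m.+1 + R) isT (leq_addr _ _).
set Den := \sum_(d | all_ge2 d) _ in mass_gt0 *.
set Bad := \sum_(d | _ && ~~ _) _ => markov.
have cR_gt0 : 0 < c * R%:R by rewrite mulr_gt0 ?ltr0n.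
rewrite /cond_prob -/Den.
set Good := \sum_(d | _ && good_event _ _ _ _ d) _.
have split : Good = Den - Bad.
  by rewrite /Den (bigID (good_event m.+1 (2 * m.+1 + R) R eps)) /= -/Good -/Bad addrK.
clearbody Den Bad Good; move: markov.
move: (64%:R * m.+1%:R * y ^+ 2) => B markov.
have bad_le : Bad / Den <= B / (c * R%:R).
  by rewrite ler_pdivrMr // mulrAC ler_pdivlMr.
have -> : Good / Den = 1 - Bad / Den by rewrite split mulrBl divff // gt_eqF.
by rewrite lerD2l lerN2.
Qed.

End MassBounds.

Lemma coef_ratio_bounds (m R : nat) (e : rat) : (0 < m)%N -> R%:R <= e * m.+1%:R ->
  let y := 3%:R * R%:R / m%:R in
  y <= 6%:R * e /\ 64%:R * m.+1%:R * y ^+ 2 <= 2304%:R * e * R%:R.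
Proof.
move=> m_gt0 Re y.
have M_gt0 : 0 < (m%:R : rat) by rewrite ltr0n.
have V_le : (m.+1%:R : rat) <= 2%:R * m%:R by rewrite -natrM ler_nat; lia.
have e_ge0 : 0 <= e.
  by rewrite -(pmulr_lge0 _ (ltr0Sn _ m)); apply: le_trans Re; rewrite ler0n.
have yM : y * m%:R = 3%:R * R%:R by rewrite divfK ?lt0r_neq0.
have y_ge0 : 0 <= y by rewrite divr_ge0 ?mulr_ge0 ?ler0n.
have eV : e * m.+1%:R <= 2%:R * (e * m%:R).
  by rewrite mulrCA ler_wpM2l.
have y_le : y <= 6%:R * e.
  rewrite -(ler_pM2r M_gt0) yM; lra.
split; first exact: y_le.
have Vy : m.+1%:R * y <= 6%:R * R%:R.
  apply: le_trans (ler_wpM2r y_ge0 V_le) _; rewrite -mulrA [m%:R * y]mulrC yM; lra.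
apply: le_trans (_ : _ <= 64%:R * (m.+1%:R * y) * y) _; first lra.
apply: le_trans (_ : _ <= 64%:R * (6%:R * R%:R) * (6%:R * e)) _; last lra.
apply: ler_pM; [|exact: y_ge0| |exact: y_le].
- by apply: mulr_ge0; [exact: ler0n | apply: mulr_ge0; [exact: ler0n | exact: y_ge0]].
- exact: (ler_wpM2l (ler0n _ 64)).
Qed.

(* 4608 = 2 * 2304 turns the Markov bound 2304 e / c of [coef_ratio_bounds],
   with e = c dl / 4608, into dl / 2. *)
Lemma cond_prob_good_event_gt (m R : nat) (eps c dl : rat) :
  (0 < m)%N -> (0 < R)%N -> 0 < c -> c <= eps -> c <= 1 -> 0 < dl -> dl <= 1 ->
  R%:R <= c * dl / 4608%:R * m.+1%:R ->
  1 - dl < cond_prob (good_event m.+1 (2 * m.+1 + R) R eps).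
Proof.
move=> m_gt0 R_gt0 c_gt0 c_eps c1 dl_gt0 dl1 Re.
have [y_le binom_le] := coef_ratio_bounds m_gt0 Re.
have cdl_le1 : c * dl <= 1 := mulr_ile1 (ltW c_gt0) (ltW dl_gt0) c1 dl1.
have y_half : 3%:R * R%:R / m%:R <= 2%:R^-1 :> rat by apply: le_trans y_le _; lra.
have cR_gt0 : 0 < c * R%:R by rewrite mulr_gt0 ?ltr0n.
have cdlR_gt0 : 0 < c * dl * R%:R by rewrite mulr_gt0 ?mulr_gt0 ?ltr0n.
have bad_lt : 64%:R * m.+1%:R * (3%:R * R%:R / m%:R) ^+ 2 / (c * R%:R) < dl.
  by rewrite (ltr_pdivrMr _ _ cR_gt0); apply: le_lt_trans binom_le _; lra.
have := cond_prob_good_event_ge m_gt0 R_gt0 c_gt0 c_eps c1 y_half.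
lra.
Qed.

Theorem mainTheorem13 (v r : nat -> nat)
  (v_pos : forall n, (0 < v n)%N) (r_pos : forall n, (0 < r n)%N)
  (v_inf : forall M : nat, exists N : nat, forall n, (N <= n)%N -> (M <= v n)%N)
  (r_inf : forall M : nat, exists N : nat, forall n, (N <= n)%N -> (M <= r n)%N)
  (r_small : forall e : rat, 0 < e ->
     exists N : nat, forall n, (N <= n)%N -> (r n)%:R <= e * (v n)%:R) :
  forall eps : rat, 0 < eps ->
  forall delta : rat, 0 < delta ->
  exists N : nat, forall n, (N <= n)%N ->
    1 - delta < cond_prob (good_event (v n) (2 * v n + r n)%N (r n) eps).
Proof.
move=> eps eps_gt0 dl dl_gt0.
case: (lerP dl 1) => [dl1 | dl_gt1]; last first.
  by exists 0%N => n _; apply: lt_le_trans _ (cond_prob_ge0 _); rewrite subr_lt0.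
have [c [c_gt0 c_eps c1]] : exists c : rat, [/\ 0 < c, c <= eps & c <= 1].
  by case: (lerP eps 1) => h; [exists eps | exists 1]; split => //; apply: ltW.
have [N1 r_le] := r_small _ (divr_gt0 (mulr_gt0 c_gt0 dl_gt0) (ltr0Sn _ 4607)).
have [N2 v_ge2] := v_inf 2%N.
exists (maxn N1 N2) => n; rewrite geq_max => /andP [/r_le Re /v_ge2].
move: (v n) (r n) (r_pos n) Re => [|m] R // R_gt0 Re m_gt0.
exact: cond_prob_good_event_gt m_gt0 R_gt0 c_gt0 c_eps c1 dl_gt0 dl1 Re.
Qed.
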